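(* For all $x\in W_{\mathbf{Q}}(\mathbf{Q}(t))$, $\rho_s(x)\ge s(x)$.
   Context: $W(\mathbf{Q}(t))$ is the Witt group of nonsingular hermitian forms over $\mathbf{Q}(t)$ with involution induced by $t\mapsto t^{-1}$, $\rho(w)$ the minimal dimension of a representing hermitian matrix, and $\sigma_w(t)$ ($t\in[0,\tfrac12)$) its averaged signature function: for a representative $A$, with $\sigma'_A(t)$ the signature of $A(e^{2\pi it})$, $\sigma_w(t)=\tfrac12(\lim_{\tau\downarrow t}\sigma'_A(\tau)+\lim_{\tau\uparrow t}\sigma'_A(\tau))$ for $t>0$ and $\sigma_w(0)=\lim_{\tau\downarrow0}\sigma'_A(\tau)$. Let $W_{\mathbf{Q}}(\mathbf{Q}(t))=W(\mathbf{Q}(t))\otimes\mathbf{Q}$. Every element has the form $w\otimes\frac1n$ with $w\in W(\mathbf{Q}(t))$, $n\ge1$; define $\rho_s(w\otimes\frac1n)=\frac{1}{4n}\rho(4w)$ and $s(w\otimes\frac1n)=\frac1n\max_t|\sigma_w(t)|$ (these are well defined). *)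

From HB Require Import structures.
From mathcomp Require Import all_boot all_order all_algebra.
From mathcomp Require Import complex.
From mathcomp Require Import all_classical all_reals all_analysis.
From mathcomp Require Import Rstruct Rstruct_topology.
From Stdlib Require Import Rdefinitions.
Local Notation R := Rdefinitions.R.

Set Implicit Arguments.
Unset Strict Implicit.
Unset Printing Implicit Defensive.

Import Order.TTheory GRing.Theory Num.Theory.
Local Open Scope ring_scope.
Local Open Scope classical_set_scope.

Definition Qt : fieldType := {fraction {poly rat}}.

Definition tQ : Qt := tofrac ('X : {poly rat}).

Definition fnum (f : Qt) : {poly rat} := ((repr f : {ratio {poly rat}}) : {poly rat} * {poly rat}).1.
Definition fden (f : Qt) : {poly rat} := ((repr f : {ratio {poly rat}}) : {poly rat} * {poly rat}).2.

Definition polyinvt (p : {poly rat}) : Qt := (map_poly (fun c : rat => tofrac (c%:P : {poly rat})) p : {poly Qt}).[tQ^-1].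

Definition qt_bar (f : Qt) : Qt := polyinvt (fnum f) / polyinvt (fden f).

Definition adjQ m n (A : 'M[Qt]_(m, n)) : 'M[Qt]_(n, m) := (map_mx qt_bar A)^T.

Definition hermitian n (A : 'M[Qt]_n) : Prop := adjQ A = A.

(* nonsingular hermitian matrices: the representatives of W(Q(t)) *)
Definition nsherm n (A : 'M[Qt]_n) : Prop := hermitian A /\ A \in unitmx.

Definition dsum m n (A : 'M[Qt]_m) (B : 'M[Qt]_n) : 'M[Qt]_(m + n) :=
  block_mx A 0 0 B.

(* metabolic form: it has a Lagrangian, i.e. a totally isotropic subspace
   (spanned by the rows of L) of half the dimension *)
Definition metabolic n (M : 'M[Qt]_n) : Prop :=
  exists k (L : 'M[Qt]_(k, n)),
    (k + k)%N = n /\ \rank L = k /\ L *m M *m adjQ L = 0.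

(* B and A represent the same element of the Witt group W(Q(t)) *)
Definition witt_equiv m n (B : 'M[Qt]_m) (A : 'M[Qt]_n) : Prop :=
  metabolic (dsum B (- A)).

Definition four m (A : 'M[Qt]_m) := dsum (dsum A A) (dsum A A).

Definition rho m (A : 'M[Qt]_m) : R :=
  inf [set (n%:R : R) | n in [set n : nat |
        exists B : 'M[Qt]_n, nsherm B /\ witt_equiv B A]].

Definition C := R[i].

Definition evalQ (f : Qt) (z : C) : C :=
  (map_poly ratr (fnum f)).[z] / (map_poly ratr (fden f)).[z].

Definition evalmx n (A : 'M[Qt]_n) (z : C) : 'M[C]_n := map_mx (evalQ ^~ z) A.

Definition expi (tau : R) : C := Complex (cos (2 * pi * tau)) (sin (2 * pi * tau)).

Definition eigenvalues n (M : 'M[C]_n) : seq C :=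
  sval (closed_field_poly_normal (char_poly M)).

Definition signature n (M : 'M[C]_n) : int :=
  (count (fun z => 0 < z) (eigenvalues M))%:Z
  - (count (fun z => z < 0) (eigenvalues M))%:Z.

Definition sigma' n (A : 'M[Qt]_n) (tau : R) : R :=
  (signature (evalmx A (expi tau)))%:~R.

Definition sigma n (A : 'M[Qt]_n) (t : R) : R :=
  if t == 0 then lim (sigma' A @ at_right t)
  else (lim (sigma' A @ at_right t) + lim (sigma' A @ at_left t)) / 2.

Definition maxsig n (A : 'M[Qt]_n) : R :=
  sup [set `|sigma A t| | t in `[0, 1/2[%classic].

(* rho_s and s on W_Q(Q(t)) = W(Q(t)) (x) Q, on the element w (x) 1/k, *)
(* with w the Witt class of A                                          *)

Definition rho_s m (A : 'M[Qt]_m) (k : nat) : R := rho (four A) / (4 * k%:R).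

Definition s_fun m (A : 'M[Qt]_m) (k : nat) : R := maxsig A / k%:R.

From Pilot Require Import Defs.
From HB Require Import structures.
From mathcomp Require Import all_boot all_order all_algebra.
From mathcomp Require Import all_classical all_reals all_analysis.
From mathcomp Require Import complex Rstruct Rstruct_topology.
From mathcomp Require Import ring lra zify.

(* At a point z = e^(2 pi i tau) of the unit circle at which all the matrices
   involved are defined, evaluation Q(t) -> C is a ring morphism carrying the
   involution t |-> t^-1 to complex conjugation.  So if B, of size n, represents
   4w = [A + A + A + A], a Lagrangian of B + (-4A) evaluates to a totally
   isotropic subspace, of half the dimension n + 4m, of the hermitian form
   B(z) + (-4A(z)).  It meets the span of the positive (resp. negative)
   eigenvectors trivially, and counting dimensions gives 4 |sign A(z)| <= n.
   Only finitely many z are bad, so this bound holds for sigma'_A on a punctured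
   neighbourhood of every tau, hence for its one-sided limits and for sigma_A;
   taking the supremum over tau and the infimum over n proves the theorem. *)

Set Implicit Arguments.
Unset Strict Implicit.
Unset Printing Implicit Defensive.

Import Order.TTheory GRing.Theory Num.Theory.
Import numFieldNormedType.Exports.
Local Open Scope ring_scope.
Local Open Scope sesquilinear_scope.
Local Notation R := Rdefinitions.R.

Section HermitianForms.
Variable F : numClosedFieldType.

Lemma mxrank_definite_isotropic N p k (X : 'M[F]_N) (P : 'M[F]_(p, N))
    (L : 'M[F]_(k, N)) :
  (forall v : 'rV_N, (v <= P)%MS -> v *m X *m v ^t* = 0 -> v = 0) ->
  L *m X *m L ^t* = 0 -> (\rank P + \rank L <= N)%N.
Proof.
move=> Pdef Liso; rewrite -mxrank_sum_cap.
suff -> : (P :&: L)%MS = 0 by rewrite mxrank0 addn0 rank_leq_col.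
apply/eqP; rewrite -submx0; apply/rV_subP => v; rewrite sub_capmx submx0.
case/andP=> vP /submxP[b vL]; apply/eqP/Pdef => //.
rewrite vL trmx_mul map_mxM -!mulmxA (mulmxA X) (mulmxA L) (mulmxA L X) Liso.
by rewrite mul0mx mulmx0.
Qed.

Definition npos n (d : 'rV[F]_n) : nat := #|[set i | 0 < d 0 i]|.

Lemma nposE n (d : 'rV[F]_n) : npos d = count (fun i => 0 < d 0 i) (enum 'I_n).
Proof.
rewrite /npos cardE enumT /enum_mem size_filter.
by apply: eq_count => i; rewrite -[mem _ i]/(i \in _) inE.
Qed.

Lemma npos_row_mx a b (d : 'rV[F]_a) (e : 'rV[F]_b) :
  npos (row_mx d e) = (npos d + npos e)%N.
Proof.
rewrite !nposE -!sum1_count !big_enum_cond /= big_split_ord /=.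
by congr (_ + _)%N; apply: eq_bigl => i; rewrite ?row_mxEl ?row_mxEr.
Qed.

Lemma npos_add_nposN n (d : 'rV[F]_n) : d \is a realmx ->
  (forall i, d 0 i != 0) -> (npos d + npos (- d))%N = n.
Proof.
move=> /mxOverP dreal d_neq0; rewrite !nposE -count_predUI.
rewrite (eq_count (a2 := predT)); last first.
  by move=> i; rewrite /= mxE oppr_gt0 orbC -real_neqr_lt ?d_neq0 ?dreal ?real0.
rewrite count_predT size_enum_ord (eq_count (a2 := pred0)) ?count_pred0 ?addn0 //.
by move=> i; rewrite /= mxE oppr_gt0; apply/negP => /andP[/lt_trans h/h]; rewrite ltxx.
Qed.

Definition pos_basis n (d : 'rV[F]_n) : 'M[F]_(npos d, n) :=
  rowsub (enum_val (A := [set i | 0 < d 0 i])) 1%:M.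

Lemma pos_basis_unitary n (d : 'rV[F]_n) : pos_basis d \is unitarymx.
Proof.
apply/unitarymxP/matrixP => j j'; rewrite !mxE.
rewrite (bigD1 (enum_val j)) //= big1 => [|i /negbTE ji]; last first.
  by rewrite !mxE eq_sym ji mul0r.
by rewrite !mxE eqxx mul1r addr0 (inj_eq enum_val_inj) eq_sym conjC_nat.
Qed.

Lemma sub_pos_basis n (d : 'rV[F]_n) (v : 'rV[F]_n) i :
  (v <= pos_basis d)%MS -> ~~ (0 < d 0 i) -> v 0 i = 0.
Proof.
case/submxP=> a -> di; rewrite !mxE big1 // => j _; rewrite !mxE.
suff /negbTE -> : enum_val j != i by rewrite mulr0.
by apply: contraNneq di => <-; have := enum_valP j; rewrite inE.
Qed.

Lemma diag_form_eq0 n (d : 'rV[F]_n) (v : 'rV[F]_n) :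
  (forall i, ~~ (0 < d 0 i) -> v 0 i = 0) ->
  v *m diag_mx d *m v ^t* = 0 -> v = 0.
Proof.
move=> vpos /(congr1 (fun M : 'M[F]_1 => M 0 0)); rewrite !mxE => form0.
have term_ge0 i : true -> 0 <= (v *m diag_mx d) 0 i * (v ^t*) i 0.
  move=> _; rewrite mul_mx_diag !mxE mulrAC.
  have [di|/vpos ->] := boolP (0 < d 0 i); last by rewrite conjC0 mulr0 mul0r.
  by rewrite mulr_ge0 ?mul_conjC_ge0 ?ltW.
apply/rowP => i; rewrite mxE.
have [di|/vpos //] := boolP (0 < d 0 i).
move: (psumr_eq0P term_ge0 form0 (i := i) isT); rewrite mul_mx_diag !mxE mulrAC.
by move/eqP; rewrite mulf_eq0 (gt_eqF di) orbF mul_conjC_eq0 => /eqP.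
Qed.

Lemma npos_isotropic_le N k (U : 'M[F]_N) (d : 'rV[F]_N) (L : 'M[F]_(k, N)) :
  U \is unitarymx -> row_free L ->
  L *m (U ^t* *m diag_mx d *m U) *m L ^t* = 0 -> (npos d + k <= N)%N.
Proof.
move=> Uu Lfree Liso; set L' := L *m U ^t*.
have rankL' : \rank L' = k.
  by rewrite mxrankMfree ?(eqP Lfree) // row_free_unit unitarymx_unit ?trmxC_unitary.
rewrite -{1}(mxrank_unitary (pos_basis_unitary d)) -rankL'.
apply: (mxrank_definite_isotropic (X := diag_mx d)).
  by move=> v vP; apply: diag_form_eq0 => i; apply: sub_pos_basis.
by rewrite /L' trmx_mul map_mxM trmxCK !mulmxA -!mulmxA in Liso *.
Qed.

Lemma hermitian_spectral n (X : 'M[F]_n) : X = X ^t* ->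
  exists U (d : 'rV_n),
    [/\ U \is unitarymx, X = U ^t* *m diag_mx d *m U & d \is a realmx].
Proof.
move=> Xherm; have XH : X \is hermsymmx.
  by apply/is_hermitianmxP; rewrite expr0 scale1r.
have /orthomx_spectralP XE := hermitian_normalmx XH.
exists (spectralmx X), (spectral_diag X); split.
- exact: spectral_unitarymx.
- by rewrite {1}XE invmx_unitary // spectral_unitarymx.
- exact: hermitian_spectral_diag_real.
Qed.

Lemma unitary_block_diag a b (V : 'M[F]_a) (W : 'M[F]_b) :
  V \is unitarymx -> W \is unitarymx -> block_mx V 0 0 W \is unitarymx.
Proof.
move=> /unitarymxP VV /unitarymxP WW; apply/unitarymxP.
rewrite tr_block_mx map_block_mx !trmx0 !map_mx0 mulmx_block.
by rewrite !mulmx0 !mul0mx !addr0 !add0r VV WW -scalar_mx_block.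
Qed.

Lemma block_diag_spectral a b (V : 'M[F]_a) (W : 'M[F]_b) d e :
  block_mx (V ^t* *m diag_mx d *m V) 0 0 (W ^t* *m diag_mx e *m W) =
  (block_mx V 0 0 W) ^t* *m diag_mx (row_mx d e) *m block_mx V 0 0 W.
Proof.
rewrite diag_mx_row tr_block_mx map_block_mx !trmx0 !map_mx0 !mulmx_block.
by rewrite !(mulmx0, mul0mx, addr0, add0r).
Qed.

Lemma opp_spectral n (V : 'M[F]_n) d :
  - (V ^t* *m diag_mx d *m V) = V ^t* *m diag_mx (- d) *m V.
Proof. by rewrite linearN /= mulmxN mulNmx. Qed.

Lemma spectral_unit_neq0 n (U : 'M[F]_n) d : U \is unitarymx ->
  U ^t* *m diag_mx d *m U \in unitmx -> forall i, d 0 i != 0.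
Proof.
move=> Uu Xu i; have /unitarymxP UU := Uu.
have : diag_mx d \in unitmx.
  have -> : diag_mx d = U *m (U ^t* *m diag_mx d *m U) *m U ^t*.
    by rewrite !mulmxA UU mul1mx -mulmxA UU mulmx1.
  by rewrite unitmx_mul [U *m _ \in _]unitmx_mul Xu !unitarymx_unit ?trmxC_unitary.
by rewrite unitmxE det_diag unitfE => /prodf_neq0/(_ i isT).
Qed.

End HermitianForms.

Lemma char_poly_similar (K : comUnitRingType) n (U D : 'M[K]_n) : U \in unitmx ->
  char_poly (invmx U *m D *m U) = char_poly D.
Proof.
move=> Uu; rewrite /char_poly /char_poly_mx !map_mxM.
set U' := map_mx polyC U; set V' := map_mx polyC (invmx U).
have VU : V' *m U' = 1%:M by rewrite -map_mxM mulVmx // map_mx1.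
have UV : U' *m V' = 1%:M by rewrite -map_mxM mulmxV // map_mx1.
have -> : 'X%:M - V' *m map_mx polyC D *m U' = V' *m ('X%:M - map_mx polyC D) *m U'.
  by rewrite mulmxBr mulmxBl [V' *m 'X%:M]scalar_mxC -(mulmxA _ V') VU mulmx1.
by rewrite !det_mulmx mulrC mulrA -det_mulmx UV det1 mul1r.
Qed.

Lemma signature_spectral n (U : 'M[C]_n) (d : 'rV[C]_n) : U \is unitarymx ->
  signature (U ^t* *m diag_mx d *m U) = (npos d)%:Z - (npos (- d))%:Z.
Proof.
move=> Uu; rewrite /signature /eigenvalues; case: closed_field_poly_normal => r /=.
rewrite (monicP (char_poly_monic _)) scale1r -invmx_unitary //.
rewrite char_poly_similar ?unitarymx_unit //.
rewrite char_poly_trig ?diag_mx_is_trig // => r_roots.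
have : perm_eq r [seq d 0 i | i <- enum 'I_n].
  apply: prod_XsubC_eq; rewrite -r_roots big_map big_enum /=.
  by apply: eq_bigr => i _; rewrite mxE eqxx mulr1n.
move=> /permP eq_r; rewrite !eq_r !count_map !nposE enumT.
by congr (_ - _); congr Posz; apply: eq_count => i; rewrite /= ?mxE ?oppr_gt0.
Qed.

Lemma metabolic_signature_bound n m k (B : 'M[C]_n) (A : 'M[C]_m)
    (L : 'M[C]_(k, n + (m + m + (m + m)))) :
  B = B ^t* -> A = A ^t* -> A \in unitmx ->
  (k + k = n + (m + m + (m + m)))%N -> row_free L ->
  L *m block_mx B 0 0 (- block_mx (block_mx A 0 0 A) 0 0 (block_mx A 0 0 A))
    *m L ^t* = 0 ->
  `|(signature A)%:~R : R| * 4 <= n%:R.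
Proof.
move=> /hermitian_spectral[UB [dB [UBu -> _]]].
move=> /hermitian_spectral[UA [dA [UAu Aspec dAreal]]] Aunit hk Lfree Liso.
have dA_neq0 : forall i, dA 0 i != 0.
  by apply: spectral_unit_neq0 UAu _; rewrite -Aspec.
pose U := block_mx UB 0 0 (block_mx (block_mx UA 0 0 UA) 0 0 (block_mx UA 0 0 UA)).
pose D := row_mx dB (- row_mx (row_mx dA dA) (row_mx dA dA)).
have Uu : U \is unitarymx by rewrite !unitary_block_diag.
have Mspec : block_mx (UB ^t* *m diag_mx dB *m UB) 0 0
    (- block_mx (block_mx A 0 0 A) 0 0 (block_mx A 0 0 A)) = U ^t* *m diag_mx D *m U.
  by rewrite Aspec !block_diag_spectral opp_spectral block_diag_spectral.
rewrite Mspec in Liso.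
have pos_le := npos_isotropic_le Uu Lfree Liso.
have neg_le : (npos (- D) + k <= n + (m + m + (m + m)))%N.
  by apply: (npos_isotropic_le Uu Lfree); rewrite -opp_spectral mulmxN mulNmx Liso oppr0.
rewrite /D !opp_row_mx !opprK !npos_row_mx in pos_le neg_le.
have := npos_add_nposN dAreal dA_neq0.
rewrite Aspec signature_spectral //.
move: pos_le neg_le; set p := npos dA; set q := npos (- dA) => pos_le neg_le pq.
have four_p_le : (4 * p)%:R <= (n + 4 * q)%:R :> R by rewrite ler_nat; lia.
have four_q_le : (4 * q)%:R <= (n + 4 * p)%:R :> R by rewrite ler_nat; lia.
rewrite natrD !natrM in four_p_le four_q_le.
rewrite intrB -[(Posz p)%:~R]/(p%:R) -[(Posz q)%:~R]/(q%:R).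
by case: (lerP 0 (p%:R - q%:R : R)) => h;
  [rewrite ger0_norm | rewrite ltr0_norm]; lra.
Qed.

Lemma tofrac_inj : injective (@tofrac {poly rat}).
Proof. by move=> p q /eqP; rewrite tofrac_eq => /eqP. Qed.

Lemma fden_neq0 (f : Qt) : fden f != 0.
Proof. exact: denom_ratioP. Qed.

Lemma fnumden (f : Qt) : f * tofrac (fden f) = tofrac (fnum f).
Proof.
rewrite /fnum /fden -{1}[f]reprK; case: (repr f) => -[p q] /= q_neq0.
rewrite !piE; apply/eqmodP; rewrite /= FracField.equivfE /FracField.mulf.
by rewrite !numden_Ratio ?mulr1 ?mulf_neq0 ?oner_neq0 // mulrC.
Qed.

Lemma fnum0 : fnum 0 = 0.
Proof. by have := fnumden 0; rewrite mul0r -tofrac0 => /tofrac_inj. Qed.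

Lemma fnum1 : fnum 1 = fden 1.
Proof. by have := fnumden 1; rewrite mul1r => /tofrac_inj. Qed.

(* [polyinvt p] unfolds to [(map_poly ratQt p).[tQ^-1]]. *)
Definition ratQt : {rmorphism rat -> Qt} := (@tofrac _ \o polyC)%FUN.

Section Evaluation.
Variable K : numClosedFieldType.

Definition cpoly (p : {poly rat}) : {poly K} := map_poly ratr p.

Lemma cpoly_eq0 p : (cpoly p == 0) = (p == 0).
Proof. exact: map_poly_eq0. Qed.

(* For [K = C] this is [evalQ f z]. *)
Definition fval (z : K) (f : Qt) : K := (cpoly (fnum f)).[z] / (cpoly (fden f)).[z].

(* [value_at z f c]: [c] is the value of [f] at [z] computed from some
   representation [f = p / q] with [q(z) != 0]; unlike [fval], it does not
   depend on the chosen representative. *)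
Definition value_at (z : K) (f : Qt) (c : K) : Prop :=
  exists p q : {poly rat}, [/\ (cpoly q).[z] != 0, f * tofrac q = tofrac p &
     c = (cpoly p).[z] / (cpoly q).[z]].

Definition defined_at (z : K) m n (X : 'M[Qt]_(m, n)) : Prop :=
  forall i j, (cpoly (fden (X i j))).[z] != 0.

Definition mx_value (z : K) m n (X : 'M[Qt]_(m, n)) (Xz : 'M[K]_(m, n)) : Prop :=
  forall i j, value_at z (X i j) (Xz i j).

Definition eval_mx (z : K) m n (X : 'M[Qt]_(m, n)) : 'M[K]_(m, n) := map_mx (fval z) X.

Definition den_poly m n (X : 'M[Qt]_(m, n)) : {poly K} :=
  \prod_i \prod_j cpoly (fden (X i j)).

Lemma den_poly_neq0 m n (X : 'M[Qt]_(m, n)) : den_poly X != 0.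
Proof.
rewrite /den_poly prodf_seq_neq0; apply/allP => i _ /=.
by rewrite prodf_seq_neq0; apply/allP => j _ /=; rewrite cpoly_eq0 fden_neq0.
Qed.

Section ValueAt.
Variable z : K.

Lemma defined_at_den_poly m n (X : 'M[Qt]_(m, n)) :
  (den_poly X).[z] != 0 -> defined_at z X.
Proof.
rewrite /den_poly horner_prod prodf_seq_neq0 => /allP X_z i j.
move: (X_z i (mem_index_enum _)); rewrite /= horner_prod prodf_seq_neq0.
by move=> /allP/(_ j (mem_index_enum _)).
Qed.

Lemma value_at_uniq f c c' : value_at z f c -> value_at z f c' -> c = c'.
Proof.
move=> [p [q [qz fq ->]]] [p' [q' [qz' fq' ->]]].
have e : p * q' = p' * q.
  by apply: tofrac_inj; rewrite !tofracM -fq -fq' mulrAC.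
have := congr1 (fun r => (cpoly r).[z]) e; rewrite /cpoly /= !rmorphM !hornerM.
by move=> e'; apply/eqP; rewrite eqr_div // e'.
Qed.

Lemma value_at_fval f : (cpoly (fden f)).[z] != 0 -> value_at z f (fval z f).
Proof. by move=> dz; exists (fnum f), (fden f); split => //; exact: fnumden. Qed.

Lemma value_atD f g c d :
  value_at z f c -> value_at z g d -> value_at z (f + g) (c + d).
Proof.
move=> [p [q [qz fq ->]]] [p' [q' [qz' fq' ->]]].
exists (p * q' + p' * q), (q * q').
rewrite /cpoly !rmorphD !rmorphM /= !hornerD !hornerM.
split; first by rewrite mulf_neq0.
  by rewrite mulrDl mulrA fq mulrCA fq' (mulrC (tofrac q)).
by rewrite addf_div.
Qed.

Lemma value_atM f g c d :
  value_at z f c -> value_at z g d -> value_at z (f * g) (c * d).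
Proof.
move=> [p [q [qz fq ->]]] [p' [q' [qz' fq' ->]]].
exists (p * p'), (q * q'); rewrite /cpoly !rmorphM /= !hornerM.
by split; rewrite ?mulf_neq0 ?mulf_div // mulrACA fq fq'.
Qed.

Lemma value_at_const a : value_at z (tofrac a%:P) (ratr a).
Proof.
exists a%:P, 1; rewrite /cpoly rmorph1 mulr1 map_polyC !hornerC divr1.
by split; rewrite ?oner_neq0.
Qed.

Lemma value_at0 : value_at z 0 0.
Proof. by have := value_at_const 0; rewrite polyC0 tofrac0 rmorph0. Qed.

Lemma value_at1 : value_at z 1 1.
Proof. by have := value_at_const 1; rewrite polyC1 tofrac1 rmorph1. Qed.

Lemma value_atN f c : value_at z f c -> value_at z (- f) (- c).
Proof.
by move=> /(value_atM (value_at_const (-1))); rewrite !rmorphN1 !mulN1r.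
Qed.

Lemma value_atV f c : value_at z f c -> c != 0 -> value_at z f^-1 c^-1.
Proof.
move=> [p [q [qz fq ->]]]; rewrite mulf_eq0 negb_or => /andP[pz _].
have p_neq0 : p != 0 by apply: contraNneq pz => ->; rewrite /cpoly rmorph0 horner0.
have f_neq0 : f != 0.
  by apply: contraNneq p_neq0 => f0; rewrite -tofrac_eq0 -fq f0 mul0r.
exists q, p; split => //; last by rewrite invf_div.
by rewrite -fq mulrA mulVf // mul1r.
Qed.

Lemma value_at_sum (I : finType) (f : I -> Qt) (c : I -> K) :
  (forall i, value_at z (f i) (c i)) -> value_at z (\sum_i f i) (\sum_i c i).
Proof.
move=> fc; apply: (big_ind2 (value_at z)) => //; first exact: value_at0.
by move=> *; exact: value_atD.
Qed.

Lemma value_at_tQ : value_at z tQ z.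
Proof.
exists 'X, 1; rewrite /cpoly rmorph1 mulr1 map_polyX hornerX hornerC divr1.
by split; rewrite ?oner_neq0.
Qed.

Lemma value_at_horner g w p : value_at z g w ->
  value_at z ((map_poly ratQt p).[g]) ((cpoly p).[w]).
Proof.
move=> gw; elim/poly_ind: p => [|p a IH].
  by rewrite /cpoly !rmorph0 !horner0; exact: value_at0.
rewrite /cpoly !rmorphD !rmorphM /= !map_polyX !map_polyC !hornerMXaddC.
by apply: value_atD; [exact: value_atM | exact: value_at_const].
Qed.

Lemma mx_value_uniq m n (X : 'M[Qt]_(m, n)) Xz Xz' :
  mx_value z X Xz -> mx_value z X Xz' -> Xz = Xz'.
Proof. by move=> h h'; apply/matrixP => i j; exact: value_at_uniq (h i j) (h' i j). Qed.

Lemma mx_value_eval m n (X : 'M[Qt]_(m, n)) :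
  defined_at z X -> mx_value z X (eval_mx z X).
Proof. by move=> Xz i j; rewrite mxE; exact: value_at_fval. Qed.

Lemma mx_value0 m n : mx_value z (0 : 'M[Qt]_(m, n)) 0.
Proof. by move=> i j; rewrite !mxE; exact: value_at0. Qed.

Lemma mx_value1 n : mx_value z (1%:M : 'M[Qt]_n) 1%:M.
Proof.
by move=> i j; rewrite !mxE; case: (i == j); [exact: value_at1 | exact: value_at0].
Qed.

Lemma mx_valueN m n (X : 'M[Qt]_(m, n)) Xz :
  mx_value z X Xz -> mx_value z (- X) (- Xz).
Proof. by move=> h i j; rewrite !mxE; exact: value_atN. Qed.

Lemma mx_valueM m n p (X : 'M[Qt]_(m, n)) (Y : 'M[Qt]_(n, p)) Xz Yz :
  mx_value z X Xz -> mx_value z Y Yz -> mx_value z (X *m Y) (Xz *m Yz).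
Proof.
by move=> hX hY i j; rewrite !mxE; apply: value_at_sum => l; exact: value_atM.
Qed.

Lemma mx_value_block m1 m2 n1 n2 (X11 : 'M[Qt]_(m1, n1)) (X12 : 'M[Qt]_(m1, n2))
    (X21 : 'M[Qt]_(m2, n1)) (X22 : 'M[Qt]_(m2, n2)) Y11 Y12 Y21 Y22 :
  mx_value z X11 Y11 -> mx_value z X12 Y12 -> mx_value z X21 Y21 -> mx_value z X22 Y22 ->
  mx_value z (block_mx X11 X12 X21 X22) (block_mx Y11 Y12 Y21 Y22).
Proof.
move=> h11 h12 h21 h22 i j.
rewrite -(fintype.splitK i) -(fintype.splitK j).
by case: (fintype.split i) => i'; case: (fintype.split j) => j' /=;
  rewrite ?block_mxEul ?block_mxEur ?block_mxEdl ?block_mxEdr.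
Qed.

Lemma mx_value_dsum m n (X : 'M[Qt]_m) (Y : 'M[Qt]_n) Xz Yz :
  mx_value z X Xz -> mx_value z Y Yz -> mx_value z (dsum X Y) (block_mx Xz 0 0 Yz).
Proof. by move=> hX hY; apply: mx_value_block => //; exact: mx_value0. Qed.

Lemma eval_mulmx_eq1 m n (X : 'M[Qt]_(m, n)) (Y : 'M[Qt]_(n, m)) :
  X *m Y = 1%:M -> defined_at z X -> defined_at z Y ->
  eval_mx z X *m eval_mx z Y = 1%:M.
Proof.
move=> XY Xz Yz; have := mx_valueM (mx_value_eval Xz) (mx_value_eval Yz).
by rewrite XY => /mx_value_uniq; apply; exact: mx_value1.
Qed.

End ValueAt.

Section UnitCircle.
Variable z : K.
Hypotheses (z_neq0 : z != 0) (conj_z : z^* = z^-1).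

Lemma value_at_polyinvt p : value_at z (polyinvt p) ((cpoly p).[z])^*.
Proof.
have := value_at_horner p (value_atV (value_at_tQ z) z_neq0).
have conj_cpoly : map_poly Num.conj (cpoly p) = cpoly p.
  rewrite /cpoly -map_poly_comp; apply: eq_map_poly => a /=.
  exact: (fmorph_rat (Num.conj : {rmorphism K -> K})).
by rewrite -conj_z -{1}conj_cpoly horner_map.
Qed.

Lemma value_at_bar f :
  (cpoly (fden f)).[z] != 0 -> value_at z (qt_bar f) (fval z f)^*.
Proof.
move=> den_z; rewrite /qt_bar /fval rmorphM fmorphV.
apply: value_atM; first exact: value_at_polyinvt.
by apply: value_atV; rewrite ?conjC_eq0 //; exact: value_at_polyinvt.
Qed.

Lemma mx_value_adj m n (X : 'M[Qt]_(m, n)) :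
  defined_at z X -> mx_value z (adjQ X) ((eval_mx z X) ^t*).
Proof. by move=> Xz i j; rewrite !mxE; exact: value_at_bar. Qed.

Lemma eval_hermitian n (X : 'M[Qt]_n) :
  Defs.hermitian X -> defined_at z X -> eval_mx z X = (eval_mx z X) ^t*.
Proof.
move=> Xherm Xz; apply: mx_value_uniq (mx_value_eval Xz) _.
by rewrite -{1}Xherm; exact: mx_value_adj.
Qed.

End UnitCircle.

End Evaluation.

Arguments den_poly {K m n}.

Lemma metabolic_signature_bound_at n m k (B : 'M[Qt]_n) (A A' : 'M[Qt]_m)
    (L : 'M[Qt]_(k, n + (m + m + (m + m)))) (L' : 'M[Qt]_(n + (m + m + (m + m)), k))
    (z : C) :
  z != 0 -> z^* = z^-1 -> Defs.hermitian B -> Defs.hermitian A -> A *m A' = 1%:M ->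
  L *m L' = 1%:M -> (k + k = n + (m + m + (m + m)))%N ->
  L *m dsum B (- four A) *m adjQ L = 0 ->
  defined_at z B -> defined_at z A -> defined_at z A' ->
  defined_at z L -> defined_at z L' ->
  `|(signature (evalmx A z))%:~R : R| * 4 <= n%:R.
Proof.
move=> z_neq0 conj_z Bherm Aherm AA' LL' hk Liso Bz Az A'z Lz L'z.
change (evalmx A z) with (eval_mx z A).
apply: (metabolic_signature_bound (B := eval_mx z B) (L := eval_mx z L)) => //.
- exact: eval_hermitian.
- exact: eval_hermitian.
- rewrite -row_free_unit; apply/row_freeP.
  by exists (eval_mx z A'); exact: eval_mulmx_eq1.
- by apply/row_freeP; exists (eval_mx z L'); exact: eval_mulmx_eq1.
- apply/esym/(mx_value_uniq (X := L *m dsum B (- four A) *m adjQ L)).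
    by rewrite Liso; exact: mx_value0.
  apply: mx_valueM; last exact: mx_value_adj.
  apply: mx_valueM; first exact: mx_value_eval.
  apply: mx_value_dsum; first exact: mx_value_eval.
  by apply/mx_valueN/mx_value_dsum; apply: mx_value_dsum; exact: mx_value_eval.
Qed.

Local Open Scope classical_set_scope.

Lemma expi_mul_conj (x : R) : expi x * (expi x)^* = 1.
Proof.
rewrite /expi; simpc; apply/eqP; rewrite eq_complex /= -!expr2 cos2Dsin2.
by rewrite mulrC addNr !eqxx.
Qed.

Lemma expi_neq0 (x : R) : expi x != 0.
Proof.
by apply: contra_eq_neq (expi_mul_conj x) => ->; rewrite mul0r eq_sym oner_neq0.
Qed.

Lemma conj_expi (x : R) : (expi x)^* = (expi x)^-1.
Proof. by apply: (mulfI (expi_neq0 x)); rewrite expi_mul_conj mulfV ?expi_neq0. Qed.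

Lemma expi_inj_near (t x : R) : `|t - x| < 1 -> expi x = expi t -> x = t.
Proof.
move=> /ltr_normlP[tx1 xt1] e.
have cos_eq : cos (2 * pi * x) = cos (2 * pi * t) by have := congr1 (@complex.Re R) e.
have sin_eq : sin (2 * pi * x) = sin (2 * pi * t) by have := congr1 (@complex.Im R) e.
pose u := pi * (x - t).
have cos2u : cos (u + u) = 1.
  have -> : u + u = 2 * pi * x - 2 * pi * t by rewrite /u; ring.
  by rewrite cosB cos_eq sin_eq -!expr2 cos2Dsin2.
have sin_u : sin u = 0.
  have := cos2Dsin2 u; rewrite trigo.cosD in cos2u.
  by move=> h; apply/eqP; rewrite -sqrf_eq0 expr2; apply/eqP; lra.
have pi_gt0 := @pi_gt0 R.
case: (ltgtP x t) => // [xt | tx]; exfalso.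
- have : 0 < sin (- u) by apply: sin_gt0_pi; apply/andP; split; rewrite /u; nra.
  by rewrite sinN sin_u oppr0 ltxx.
- have : 0 < sin u by apply: sin_gt0_pi; apply/andP; split; rewrite /u; nra.
  by rewrite sin_u ltxx.
Qed.

Lemma continuous_scale_2pi (f : R -> R) (t : R) : continuous f ->
  {for t, continuous (fun x : R => f (2 * pi * x))}.
Proof.
move=> f_cont; apply: (continuous_comp (f := fun x : R => 2 * pi * x)) (f_cont _).
by apply: cvgMl_tmp; exact: cvg_id.
Qed.

Lemma near_neq_continuous (g : R -> R) (t a : R) :
  {for t, continuous g} -> g t != a -> \forall x \near t, g x != a.
Proof.
move=> g_cont gta; apply: (g_cont [set y | y != a]).
by apply: open_nbhs_nbhs; split => //; exact: open_neq.
Qed.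

Lemma near_expi_neq (t : R) (r : C) : \forall x \near t^', expi x != r.
Proof.
have [<-|expi_t] := eqVneq (expi t) r.
  have t1 : \forall x \near t, `|t - x| < 1.
    by apply/nbhs_ballP; exists 1 => //=; exact: ltr01.
  apply: filterS2 (nbhs_dnbhs t1) (nbhs_dnbhs_neq t) => x tx1 xt.
  by apply: contraNneq xt => /(expi_inj_near tx1)/eqP.
apply: nbhs_dnbhs.
have cos_cont := continuous_scale_2pi (t := t) (@continuous_cos R).
have sin_cont := continuous_scale_2pi (t := t) (@continuous_sin R).
have [cos_t|sin_t] : cos (2 * pi * t) != complex.Re r \/ sin (2 * pi * t) != complex.Im r.
  by move: expi_t; case: r => a b; rewrite /expi eq_complex negb_and => /orP.
- apply: filterS (near_neq_continuous cos_cont cos_t).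
  by move=> x cos_x; apply: contraNneq cos_x => <-.
- apply: filterS (near_neq_continuous sin_cont sin_t).
  by move=> x sin_x; apply: contraNneq sin_x => <-.
Qed.

Lemma near_root_free (t : R) (P : {poly C}) : P != 0 ->
  \forall x \near t^', P.[expi x] != 0.
Proof.
move=> P_neq0; have [rs P_eq] := closed_field_poly_normal P.
have : \forall x \near t^', all (fun r => expi x != r) rs.
  elim: rs {P_eq} => [|r rs IH]; first exact: nearW.
  by apply: filterS2 (near_expi_neq t r) IH => x /= -> ->.
apply: filterS => x /allP x_notin.
rewrite P_eq hornerZ mulf_neq0 ?lead_coef_eq0 // horner_prod prodf_seq_neq0.
by apply/allP => r /x_notin; rewrite hornerXsubC subr_eq0.
Qed.

Lemma lim_norm_le (T : Type) (F : set_system T) (PF : ProperFilter F) (f : T -> R) c :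
  0 <= c -> (\forall x \near F, `|f x| <= c) -> `|lim (f @ F)| <= c.
Proof.
move=> c_ge0 fc; have [f_cvg|f_dvg] := pselect (cvg (f @ F)).
  apply/ler_normlP; rewrite lerNl; split.
    by apply: limr_ge => //; apply: filterS fc => x /ler_normlP[]; rewrite lerNl.
  by apply: limr_le => //; apply: filterS fc => x /ler_normlP[].
by rewrite /lim dvg_inP // normr0.
Qed.

Lemma near_at_right (t : R) (P : R -> Prop) :
  (\forall x \near t^', P x) -> \forall x \near t^'+, P x.
Proof.
by rewrite !near_withinE; apply: filterS => x Px tx; apply: Px; rewrite gt_eqF.
Qed.

Lemma near_at_left (t : R) (P : R -> Prop) :
  (\forall x \near t^', P x) -> \forall x \near t^'-, P x.
Proof.
by rewrite !near_withinE; apply: filterS => x Px xt; apply: Px; rewrite lt_eqF.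
Qed.

Lemma sigma_norm_le n (A : 'M[Qt]_n) (t c : R) : 0 <= c ->
  (\forall x \near t^', `|sigma' A x| <= c) -> `|sigma A t| <= c.
Proof.
move=> c_ge0 near_c.
have /ler_normlP[r1 r2] :=
  lim_norm_le (at_right_proper_filter t) c_ge0 (near_at_right near_c).
have /ler_normlP[l1 l2] :=
  lim_norm_le (at_left_proper_filter t) c_ge0 (near_at_left near_c).
by rewrite /sigma; case: ifP => _; apply/ler_normlP; split; lra.
Qed.

Lemma polyinvt_neq0 p : p != 0 -> polyinvt p != 0.
Proof.
rewrite -(cpoly_eq0 C) => /(near_root_free 0)/filter_ex[x px].
apply: contra_neq px => pinv0.
have := value_at_polyinvt (expi_neq0 x) (conj_expi x) p.
by rewrite pinv0 => /(value_at_uniq (value_at0 _))/esym/eqP; rewrite conjC_eq0 => /eqP.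
Qed.

Lemma qt_bar0 : qt_bar 0 = 0.
Proof. by rewrite /qt_bar fnum0 /polyinvt map_poly0 horner0 mul0r. Qed.

Lemma qt_bar1 : qt_bar 1 = 1.
Proof. by rewrite /qt_bar fnum1 divff // polyinvt_neq0 // fden_neq0. Qed.

Lemma map_qt_bar0 m n : map_mx qt_bar (0 : 'M[Qt]_(m, n)) = 0.
Proof. by apply/matrixP => i j; rewrite !mxE qt_bar0. Qed.

Lemma map_qt_bar1 n : map_mx qt_bar (1%:M : 'M[Qt]_n) = 1%:M.
Proof.
by apply/matrixP => i j; rewrite !mxE; case: (i == j); rewrite ?qt_bar1 ?qt_bar0.
Qed.

Lemma adjQ_dsum a b (X : 'M[Qt]_a) (Y : 'M[Qt]_b) :
  adjQ (dsum X Y) = dsum (adjQ X) (adjQ Y).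
Proof. by rewrite /adjQ /dsum map_block_mx !map_qt_bar0 tr_block_mx !trmx0. Qed.

Lemma four_nsherm m (A : 'M[Qt]_m) : nsherm A -> nsherm (four A).
Proof.
move=> [Aherm Aunit]; split; first by rewrite /Defs.hermitian /four !adjQ_dsum Aherm.
by rewrite /four /dsum !block_diag_mx_unit Aunit.
Qed.

Lemma metabolic_dsum_opp n (X : 'M[Qt]_n) : metabolic (dsum X (- X)).
Proof.
exists n, (row_mx 1%:M 1%:M); split => //; split.
  apply/eqP/row_freeP; exists (col_mx 1%:M 0).
  by rewrite mul_row_col mulmx1 mulmx0 addr0.
rewrite /dsum mul_row_block !mulmx0 !mul1mx addr0 add0r.
by rewrite /adjQ map_row_mx map_qt_bar1 tr_row_mx trmx1 mul_row_col !mulmx1 subrr.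
Qed.

Lemma witt_four_sigma_le m n (A : 'M[Qt]_m) (B : 'M[Qt]_n) :
  nsherm A -> nsherm B -> witt_equiv B (four A) ->
  forall t : R, `|sigma A t| * 4 <= n%:R.
Proof.
move=> [Aherm Aunit] [Bherm _] [k [L [hk [rankL Liso]]]] t.
have /row_freeP[L' LL'] : row_free L by rewrite /row_free rankL.
have AA' : A *m invmx A = 1%:M by rewrite mulmxV.
pose G : {poly C} :=
  den_poly B * den_poly A * den_poly (invmx A) * den_poly L * den_poly L'.
have G_neq0 : G != 0 by rewrite !mulf_neq0 ?den_poly_neq0.
suff : `|sigma A t| <= n%:R / 4 by lra.
apply: sigma_norm_le; first by rewrite divr_ge0 ?ler0n.
apply: filterS (near_root_free t G_neq0) => x.
rewrite !hornerM !mulf_eq0 !negb_or => /andP[/andP[/andP[/andP[Bx Ax] A'x] Lx] L'x].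
have := metabolic_signature_bound_at (expi_neq0 x) (conj_expi x)
  Bherm Aherm AA' LL' hk Liso
  (defined_at_den_poly Bx) (defined_at_den_poly Ax) (defined_at_den_poly A'x)
  (defined_at_den_poly Lx) (defined_at_den_poly L'x).
by rewrite /sigma'; lra.
Qed.

Theorem mainTheorem7 (m k : nat) (A : 'M[Qt]_m) :
  (0 < k)%N -> nsherm A -> s_fun A k <= rho_s A k.
Proof.
move=> _ Aherm.
have sigma_le t : `|sigma A t| * 4 <= rho (four A).
  apply: lb_le_inf => [|_ [n [B [Bherm BA]] <-]]; last exact: witt_four_sigma_le BA t.
  exists (m + m + (m + m))%:R, (m + m + (m + m))%N => //.
  by exists (four A); split; [exact: four_nsherm | exact: metabolic_dsum_opp].
have maxsig_le : maxsig A <= rho (four A) / 4.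
  apply: ge_sup => [|_ [t _ <-]]; last by have := sigma_le t; lra.
  by exists `|sigma A 0|, 0 => //=; rewrite in_itv /= lexx; lra.
rewrite /s_fun /rho_s !RdivE RmultE invfM mulrA.
apply: ler_wpM2r; first by rewrite invr_ge0 ler0n.
by rewrite IZRposE INRE.
Qed.
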